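(* In the setting below, the vector $1\otimes e^{\lambda_6}\in V^{\Lambda_6}$ is a highest weight vector of type $Vir(\tfrac45,\tfrac1{15})\otimes W^{\Omega_4}$, i.e. it satisfies (HW1)–(HW5) with $h=1/15$ and $\omega_j=\omega_4$.
   Context: Setting. $Q$ is the $E_6$ root lattice with simple roots $\alpha_1,\dots,\alpha_6$ (Dynkin chain $\alpha_1-\alpha_3-\alpha_4-\alpha_5-\alpha_6$, $\alpha_2$ attached to $\alpha_4$), form from the Cartan matrix, fundamental weights $\lambda_i$, $P=\bigoplus\mathbb Z\lambda_i$, $\mathfrak h=\mathbb C\otimes P$. $\varepsilon$ bimultiplicative on $P$ with $[\varepsilon(\lambda_i,\lambda_j)]$ rows $(1,1,1,1,1,1)$, $(-1,1,1,1,1,-1)$, $(-1,1,1,1,1,1)$, $(1,-1,1,1,1,1)$, $(1,1,1,1,1,-1)$, $(1,1,1,1,1,1)$. $V_P=S(\hat{\mathfrak h}^-)\otimes\mathbb C[P]$ with Heisenberg operators $h(n)$ ($[h(m),h'(n)]=m\langle h,h'\rangle\delta_{m+n,0}$, $h(n)1=0$ for $n>0$, $h(0)(u\otimes e^\beta)=\langle h,\beta\rangle u\otimes e^\beta$). For $\alpha\in Q$, acting on $V_P$: $Y(1\otimes e^\alpha,z)=\exp(\sum_{k\ge1}\frac{\alpha(-k)}kz^k)\exp(-\sum_{k\ge1}\frac{\alpha(k)}kz^{-k})e_\alpha z^{\alpha(0)}=\sum_n\{1\otimes e^\alpha\}_nz^{-n-1}$, $e_\alpha(u\otimes e^\beta)=\varepsilon(\alpha,\beta)u\otimes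 e^{\alpha+\beta}$, $z^{\alpha(0)}(u\otimes e^\beta)=z^{\langle\alpha,\beta\rangle}u\otimes e^\beta$; $Y(h_1(-1)\cdots h_k(-1)\otimes e^\alpha,z)=\,:h_1(z)\cdots h_k(z)Y(1\otimes e^\alpha,z):$, $h(z)=\sum_nh(n)z^{-n-1}$. $V^{\Lambda_6}$ is spanned by $S(\hat{\mathfrak h}^-)\otimes e^\nu$, $\nu\in\lambda_6+Q$. $\tau$: $\alpha_1\leftrightarrow\alpha_6$, $\alpha_3\leftrightarrow\alpha_5$; $\mathrm{Proj}(\nu)=(\nu+\tau\nu)/2$. $\theta=\alpha_1+2\alpha_2+2\alpha_3+3\alpha_4+2\alpha_5+\alpha_6$. Raising operators of $\tilde{\mathfrak a}$ ($F_4^{(1)}$): $\{\beta_1\}_0=\{1\otimes e^{\alpha_2}\}_0$, $\{\beta_2\}_0=\{1\otimes e^{\alpha_4}\}_0$, $\{\beta_3\}_0=\{1\otimes e^{\alpha_3}\}_0+\{1\otimes e^{\alpha_5}\}_0$, $\{\beta_4\}_0=\{1\otimes e^{\alpha_1}\}_0+\{1\otimes e^{\alpha_6}\}_0$, $\{1\otimes e^{-\theta}\}_1$. Coset conformal vector $\omega=\frac1{10}[(-\lambda_1+\lambda_6)(-1)^2+(\lambda_3-\lambda_5)(-1)^2+(\lambda_1-\lambda_3+\lambda_5-\lambda_6)(-1)^2]\otimes e^0+\frac15(-1\otimes e^{\pm\gamma_1}-1\otimes e^{\pm\gamma_2}+1\otimes e^{\pm\gamma_3})$, $\gamma_1=\alpha_1-\alpha_6$,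 $\gamma_2=\alpha_3-\alpha_5$, $\gamma_3=\gamma_1+\gamma_2$, $1\otimes e^{\pm\gamma}:=1\otimes e^\gamma+1\otimes e^{-\gamma}$; $L(n)=\{\omega\}_{n+1}$ (Virasoro, $c=4/5$, commuting with $\tilde{\mathfrak a}$). $\omega_4=\frac{\lambda_1+\lambda_6}2$, $W^{\Omega_4}$ the level one irreducible $F_4^{(1)}$-module whose highest weight has finite part $\omega_4$. A nonzero $v$ is a highest weight vector of type $Vir(\frac45,h)\otimes W^{\Omega_j}$ if (HW1) $\{1\otimes e^{-\theta}\}_1v=0$; (HW2) $\{\beta_i\}_0v=0$, $i=1,\dots,4$; (HW3) $L(1)v=L(2)v=0$; (HW4) $L(0)v=hv$; (HW5) $v\in\bigoplus_kS(\hat{\mathfrak h}^-)\otimes e^{\nu_k}$ with $\mathrm{Proj}(\nu_k)=\omega_j$. *)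

From HB Require Import structures.
From mathcomp Require Import all_boot all_order all_algebra all_field.
From mathcomp Require Import finmap.
From mathcomp.multinomials Require Import monalg.

Set Implicit Arguments.
Unset Strict Implicit.
Unset Printing Implicit Defensive.

Import GRing.Theory Num.Theory.
Local Open Scope ring_scope.

(* Indices: 'I_6 with 0,1,2,3,4,5 standing for 1,2,3,4,5,6 of the paper. *)

Definition mx_of_seqs (s : seq (seq int)) : 'M[int]_6 :=
  \matrix_(i < 6, j < 6) nth 0 (nth [::] s i) j.

Definition rv_of_seq (R : nmodType) (s : seq R) : 'rV[R]_6 :=
  \row_(j < 6) nth 0 s j.

(* Cartan matrix of E6: chain a1-a3-a4-a5-a6, a2 attached to a4. *)
Definition cartanE6 : 'M[int]_6 := mx_of_seqs
  [:: [:: 2;  0; -1;  0;  0;  0];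
      [:: 0;  2;  0; -1;  0;  0];
      [:: -1; 0;  2; -1;  0;  0];
      [:: 0; -1; -1;  2; -1;  0];
      [:: 0;  0;  0; -1;  2; -1];
      [:: 0;  0;  0;  0; -1;  2]].

(* The weight lattice P, in coordinates w.r.t. the fundamental weights
   lambda_1..lambda_6. *)
Definition lat := 'rV[int]_6.

(* h = C (x) P, in coordinates w.r.t. lambda_1..lambda_6. *)
Definition hv := 'rV[algC]_6.

Definition lam (i : nat) : lat := delta_mx 0 (inord i).

(* Elements of Q are given by their coordinates c w.r.t. the simple roots;
   alpha_i = sum_j A_ij lambda_j. *)
Definition qcoord := 'rV[int]_6.
Definition rootv (c : qcoord) : lat := c *m cartanE6.
Definition qunit (i : nat) : qcoord := delta_mx 0 (inord i).

Definition hvec (b : lat) : hv := map_mx intr b.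

(* The form: <alpha_i, alpha_j> = A_ij, hence <lambda_i,lambda_j> = (A^-1)_ij. *)
Definition gramP : 'M[algC]_6 := invmx (map_mx intr cartanE6).
Definition form (h h' : hv) : algC := (h *m gramP *m h'^T) 0 0.

(* <alpha, beta> for alpha in Q (root coordinates c) and beta in P: integer *)
Definition pairQP (c : qcoord) (b : lat) : int := (c *m b^T) 0 0.

Definition epsM : 'M[int]_6 := mx_of_seqs
  [:: [:: 1;  1; 1; 1; 1;  1];
      [:: -1; 1; 1; 1; 1; -1];
      [:: -1; 1; 1; 1; 1;  1];
      [:: 1; -1; 1; 1; 1;  1];
      [:: 1;  1; 1; 1; 1; -1];
      [:: 1;  1; 1; 1; 1;  1]].

Definition eps (b g : lat) : algC :=
  \prod_(i < 6) \prod_(j < 6) ((epsM i j)%:~R : algC) ^ (b 0 i * g 0 j).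

(* V_P = S(h^-) (x) C[P].  S(h^-) is the polynomial algebra in the
   variables lambda_i(-k), k >= 1; the variable (i, l) stands for
   lambda_i(-(l+1)).  A basis of V_P is given by pairs (monomial, beta). *)
Definition Hvar : choiceType := ((ordinal 6) * nat)%type.
Definition Hmon := {cmonom Hvar}.
Definition Key : choiceType := (Hmon * lat)%type.
Definition V := {malg algC[Key]}.

Definition bvec (m : Hmon) (b : lat) : V := << ((m, b) : Key) >>.

Definition wt (m : Hmon) : nat :=
  (\sum_(x <- finsupp (cmonom_val m)) m x * (x.2).+1)%N.

Definition linext (f : Key -> V) (v : V) : V :=
  \sum_(k <- msupp v) v@_k *: f k.

Definition heis_basis (h : hv) (n : int) (k : Key) : V :=
  let: (m, b) := k in
  match n with
  | Posz 0 => form h (hvec b) *: bvec m b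
  | Posz l.+1 =>
      \sum_(i < 6) ((l.+1)%:R * form h (hvec (delta_mx 0 i)) * (m (i, l))%:R)
                    *: bvec (divcm m (ucm ((i, l) : Hvar))) b
  | Negz l => \sum_(i < 6) h 0 i *: bvec (mulcm m (ucm ((i, l) : Hvar))) b
  end.

Definition heis (h : hv) (n : int) : V -> V := linext (heis_basis h n).

(* Coefficients of exp(sum_{k>=1} a_k w^k) = sum_j (expco a j) w^j,
   computed as sum_r X^r / r! where X = sum_k a_k w^k:
   powco a r j = coefficient of w^j in X^r. *)
Fixpoint powco (a : nat -> V -> V) (r j : nat) (v : V) : V :=
  match r with
  | 0 => if j == 0%N then v else 0
  | r'.+1 => \sum_(1 <= k < j.+1) a k (powco a r' (j - k) v)
  end.

Definition expco (a : nat -> V -> V) (j : nat) (v : V) : V :=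
  \sum_(r < j.+1) ((r`!)%:R : algC)^-1 *: powco a r j v.

(* E^-(alpha, z) = exp(sum_k alpha(-k)/k z^k) = sum_i Eminus alpha i z^i *)
Definition Eminus (a : hv) : nat -> V -> V :=
  expco (fun k v => ((k%:R : algC)^-1) *: heis a (- (k%:Z)) v).
(* E^+(alpha, z) = exp(- sum_k alpha(k)/k z^-k) = sum_j Eplus alpha j z^-j *)
Definition Eplus (a : hv) : nat -> V -> V :=
  expco (fun k v => (- (k%:R : algC)^-1) *: heis a (k%:Z) v).

(* Modes {1 (x) e^alpha}_n, alpha in Q with root coordinates c:
   Y(1(x)e^alpha, z) = E^-(z) E^+(z) e_alpha z^{alpha(0)}.
   On u (x) e^beta only the terms j <= wt u of E^+ are non-zero. *)
Definition vop_basis (c : qcoord) (n : int) (k : Key) : V :=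
  let: (m, b) := k in
  let a := rootv c in
  eps a b *:
    \sum_(j < (wt m).+1)
      (let i := (j%:Z - pairQP c b - n - 1)%R in
       if (0 <= i)%R then Eminus (hvec a) `|i|%N (Eplus (hvec a) j (bvec m (a + b)))
       else 0).

Definition vop (c : qcoord) (n : int) : V -> V := linext (vop_basis c n).

(* Modes {h(-1) h'(-1) (x) e^0}_n = sum_{p+q = n-1} :h(p) h'(q): ;
   on u (x) e^beta only terms with |p| <= wt u + |n| + 1 are non-zero. *)
Definition normal2 (h h' : hv) (p q : int) (v : V) : V :=
  if (p < 0)%R then heis h p (heis h' q v) else heis h' q (heis h p v).

Definition quad_basis (h h' : hv) (n : int) (k : Key) : V :=
  let B := (wt k.1 + `|n| + 1)%N in
  \sum_(t < (2 * B).+1)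
    (let p := (t%:Z - B%:Z)%R in normal2 h h' p (n - 1 - p)%R (<< k >>)).

Definition quad (h h' : hv) (n : int) : V -> V := linext (quad_basis h h' n).

(* The coset conformal vector omega and L(n) = {omega}_{n+1}. *)
Definition h_a : hv := rv_of_seq [:: -1; 0; 0; 0; 0; 1].
Definition h_b : hv := rv_of_seq [:: 0; 0; 1; 0; -1; 0].
Definition h_c : hv := rv_of_seq [:: 1; 0; -1; 0; 1; -1].

Definition gamma1 : qcoord := rv_of_seq [:: 1; 0; 0; 0; 0; -1].
Definition gamma2 : qcoord := rv_of_seq [:: 0; 0; 1; 0; -1; 0].
Definition gamma3 : qcoord := gamma1 + gamma2.

Definition vop_pm (c : qcoord) (n : int) (v : V) : V := vop c n v + vop (- c) n v.

Definition omega_mode (n : int) (v : V) : V :=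
  (10%:R : algC)^-1 *: (quad h_a h_a n v + quad h_b h_b n v + quad h_c h_c n v)
  + (5%:R : algC)^-1 *: (- vop_pm gamma1 n v - vop_pm gamma2 n v + vop_pm gamma3 n v).

Definition Lvir (n : int) : V -> V := omega_mode (n + 1).

Definition theta : qcoord := rv_of_seq [:: 1; 2; 2; 3; 2; 1].

Definition raising (i : 'I_4) (v : V) : V :=
  match val i with
  | 0 => vop (qunit 1) 0 v
  | 1 => vop (qunit 3) 0 v
  | 2 => vop (qunit 2) 0 v + vop (qunit 4) 0 v
  | _ => vop (qunit 0) 0 v + vop (qunit 5) 0 v
  end.

(* The diagram automorphism tau on P (lambda coordinates):
   1 <-> 6, 3 <-> 5, 2 and 4 fixed. *)
Definition tau_ix (i : 'I_6) : 'I_6 :=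
  inord (nth 0%N [:: 5; 1; 4; 3; 2; 0]%N i).
Definition tau (b : lat) : lat := \row_(i < 6) b 0 (tau_ix i).
Definition Proj (b : lat) : hv := (2%:R : algC)^-1 *: (hvec b + hvec (tau b)).

Definition omega4 : hv := (2%:R : algC)^-1 *: (hvec (lam 0) + hvec (lam 5)).

Definition in_VLambda6 (v : V) : Prop :=
  forall k, k \in msupp v -> exists c : qcoord, k.2 = lam 5 + rootv c.

(* Highest weight vector of type Vir(4/5, h) (x) W^{Omega_j}, where wj is
   the finite part omega_j of the highest weight. *)
Definition is_hw_vector (h : algC) (wj : hv) (v : V) : Prop :=
  v != 0 /\
  [/\ vop (- theta) 1 v = 0,
      (forall i : 'I_4, raising i v = 0),
      (Lvir 1 v = 0 /\ Lvir 2 v = 0),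
      Lvir 0 v = h *: v
    & forall k, k \in msupp v -> Proj k.2 = wj].

From Pilot Require Import Defs.
From HB Require Import structures.
From mathcomp Require Import all_boot all_order all_algebra all_field.
From mathcomp Require Import finmap.
From mathcomp.multinomials Require Import monalg.
From mathcomp Require Import zify ring.

(* Proof idea: on a vector 1 (x) e^b all positive Heisenberg modes vanish and
   h(0) acts by <h, b>.  Hence a normally ordered mode
   {h(-1) h'(-1) (x) e^0}_n with n > 0 survives only through h(0) h'(0), for
   n = 1; and since Y(1 (x) e^alpha, z)(1 (x) e^b) = z^<alpha, b> (e^(alpha+b) + O(z)),
   the modes n >= -<alpha, b> vanish.  For b = lambda_6 every pairing
   <alpha, lambda_6> entering (HW1)-(HW4) is small enough for these modes to
   vanish, and L(0) reduces to
   (1/10)(<h_a,l6>^2 + <h_b,l6>^2 + <h_c,l6>^2) = (1/10)(4/9 + 1/9 + 1/9) = 1/15. *)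

Import Order.TTheory GRing.Theory Num.Theory.
Local Open Scope ring_scope.

Lemma linext0 f : linext f 0 = 0.
Proof. by rewrite /linext msupp0 big_nil. Qed.

Lemma linextZU f c k : linext f (c *: << k >>) = c *: f k.
Proof.
have [->|c_neq0] := eqVneq c 0; first by rewrite !scale0r linext0.
rewrite /linext msuppZ (negbTE c_neq0) msuppU oner_eq0 big_seq_fset1.
by rewrite mcoeffZ mcoeffU eqxx mulr1.
Qed.

Lemma linextU f k : linext f << k >> = f k.
Proof. by rewrite -[<< k >>]scale1r linextZU scale1r. Qed.

Lemma msupp_bvec m b : msupp (bvec m b) = [fset (m, b)]%fset.
Proof. by rewrite msuppU oner_eq0. Qed.

Lemma wt_onecm : wt (onecm _) = 0%N.
Proof. by rewrite /wt big1 // => x _; rewrite onecmE. Qed.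

Lemma pairQPNl c b : pairQP (- c) b = - pairQP c b.
Proof. by rewrite /pairQP mulNmx mxE. Qed.

Section VacuumVector.
Variable b : lat.
Let v : V := bvec (onecm _) b.

Lemma heis_vac_pos h l : heis h (Posz l.+1) v = 0.
Proof.
rewrite /heis /v /bvec linextU /=; apply: big1 => i _.
by rewrite onecmE mulr0n mulr0 scale0r.
Qed.

Lemma heis_vac_zero h : heis h 0 v = Defs.form h (hvec b) *: v.
Proof. by rewrite /heis /v /bvec linextU. Qed.

Lemma heis_vacZ h n c : heis h n (c *: v) = c *: heis h n v.
Proof. by rewrite /heis /v /bvec linextZU linextU. Qed.

Lemma normal2_vac h h' p q : 0 <= p + q ->
  normal2 h h' p q v =
  (if (p == 0) && (q == 0) then Defs.form h (hvec b) * Defs.form h' (hvec b)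
   else 0) *: v.
Proof.
rewrite /normal2.
case: p => [[|p]|p]; case: q => [[|q]|q] //= pq_ge0; rewrite ?scale0r; try lia.
- by rewrite heis_vac_zero heis_vacZ heis_vac_zero scalerA mulrC.
- by rewrite heis_vac_zero heis_vacZ heis_vac_pos scaler0.
all: by rewrite heis_vac_pos /heis linext0.
Qed.

Lemma quad_vac h h' (n : nat) : (0 < n)%N ->
  quad h h' n%:Z v =
  (if n == 1%N then Defs.form h (hvec b) * Defs.form h' (hvec b) else 0) *: v.
Proof.
move=> n_gt0; rewrite /quad /v /bvec linextU /quad_basis /= wt_onecm add0n.
set B := (`|n%:Z| + 1)%N.
have B_lt : (B < (2 * B).+1)%N by rewrite /B; lia.
rewrite (bigD1 (Ordinal B_lt)) //= big1 => [|t t_neq].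
  rewrite normal2_vac; last by rewrite /B; lia.
  by rewrite subrr eqxx subr0 subr_eq0 addr0.
rewrite normal2_vac; last by rewrite /B; lia.
suff /negbTE-> : (t%:Z - B%:Z)%R != 0 by rewrite scale0r.
by rewrite subr_eq0 eqz_nat; apply: contra t_neq => /eqP t_eq; apply/eqP/val_inj.
Qed.

Lemma vop_vac c n : - pairQP c b <= n -> vop c n v = 0.
Proof.
move=> n_ge; rewrite /vop /v /bvec linextU /vop_basis /= wt_onecm big_ord1 /=.
suff /lt_geF-> : (0%:Z - pairQP c b - n - 1 < 0) by rewrite scaler0.
lia.
Qed.

Lemma vop_pm_vac c n : `|pairQP c b| <= n -> vop_pm c n v = 0.
Proof.
move=> n_ge; rewrite /vop_pm !vop_vac ?addr0 //; apply: le_trans n_ge.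
  by rewrite pairQPNl opprK ler_norm.
by rewrite -normrN ler_norm.
Qed.

End VacuumVector.

Definition cartanE6_adj : 'M[int]_6 := mx_of_seqs
  [:: [:: 4; 3;  5;  6;  4; 2];
      [:: 3; 6;  6;  9;  6; 3];
      [:: 5; 6; 10; 12;  8; 4];
      [:: 6; 9; 12; 18; 12; 6];
      [:: 4; 6;  8; 12; 10; 5];
      [:: 2; 3;  4;  6;  5; 4]].

Lemma cartanE6_mul_adj : cartanE6 *m cartanE6_adj = 3%:M.
Proof.
apply/matrixP => i j; rewrite !mxE !big_ord_recr big_ord0 /= !mxE.
by case: i => [[|[|[|[|[|[|i]]]]]] ?] //; case: j => [[|[|[|[|[|[|j]]]]]] ?].
Qed.

Lemma gramPE : gramP = (3%:R : algC)^-1 *: map_mx intr cartanE6_adj.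
Proof.
have three_neq0 : (3%:R : algC) != 0 by rewrite pnatr_eq0.
have mulA : map_mx intr cartanE6 *m ((3%:R : algC)^-1 *: map_mx intr cartanE6_adj) = 1%:M.
  rewrite -scalemxAr -map_mxM cartanE6_mul_adj map_scalar_mx scale_scalar_mx /=.
  by rewrite -[(3%:~R : algC)]/(3%:R) mulVf.
have [A_unit _] := mulmx1_unit mulA.
by rewrite /gramP -[invmx _]mulmx1 -mulA mulmxA mulVmx // mul1mx.
Qed.

Lemma form_hvec x y :
  Defs.form (hvec x) (hvec y) =
  (3%:R : algC)^-1 * ((x *m cartanE6_adj *m y^T) 0 0)%:~R.
Proof.
by rewrite /Defs.form /hvec gramPE -scalemxAr -scalemxAl mxE map_trmx -!map_mxM mxE.
Qed.

Lemma hvec_rv_of_seq (s : seq int) : hvec (rv_of_seq s) = rv_of_seq (map intr s).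
Proof.
apply/matrixP => i j; rewrite !mxE.
have [j_lt|j_ge] := ltnP j (size s); first by rewrite (nth_map 0).
by rewrite !nth_default ?size_map.
Qed.

Lemma mulmx_tr_lam m (A : 'M[int]_(m, 6)) i k : (A *m (lam i)^T) k 0 = A k (inord i).
Proof.
rewrite mxE (bigD1 (inord i)) //= big1 ?addr0 => [|j /negbTE j_neq].
  by rewrite !mxE !eqxx mulr1.
by rewrite !mxE j_neq mulr0.
Qed.

Lemma pairQP_lam c i : pairQP c (lam i) = c 0 (inord i).
Proof. exact: mulmx_tr_lam. Qed.

Lemma form_lam (s : seq int) i :
  Defs.form (hvec (rv_of_seq s)) (hvec (lam i)) =
  (3%:R : algC)^-1 * (\sum_(k < 6) nth 0 s k * cartanE6_adj k (inord i))%:~R.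
Proof.
rewrite form_hvec -mulmxA mxE; congr (_ * (_ %:~R)); apply: eq_bigr => k _.
by rewrite mulmx_tr_lam mxE.
Qed.

Notation vac6 := (bvec (onecm Hvar) (lam 5)).

Lemma h_abcE :
  [/\ h_a = hvec (rv_of_seq [:: -1; 0; 0; 0; 0; 1]),
      h_b = hvec (rv_of_seq [:: 0; 0; 1; 0; -1; 0])
    & h_c = hvec (rv_of_seq [:: 1; 0; -1; 0; 1; -1])].
Proof. by split; rewrite hvec_rv_of_seq /= ?intrN. Qed.

Lemma form_h_lam6 :
  [/\ Defs.form h_a (hvec (lam 5)) = 2%:R / 3%:R,
      Defs.form h_b (hvec (lam 5)) = - 3%:R^-1
    & Defs.form h_c (hvec (lam 5)) = - 3%:R^-1].
Proof.
have [-> -> ->] := h_abcE.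
rewrite !form_lam !big_ord_recr !big_ord0 /= !mxE /= inordK //=.
have three_neq0 : (3%:R : algC) != 0 by rewrite pnatr_eq0.
by split; field.
Qed.

Lemma omega_mode_vac6 (n : nat) : (0 < n)%N ->
  omega_mode n vac6 = (if n == 1%N then (15%:R : algC)^-1 else 0) *: vac6.
Proof.
move=> n_gt0; rewrite /omega_mode !quad_vac // !vop_pm_vac;
  try by rewrite pairQP_lam !mxE /= inordK.
rewrite oppr0 !addr0 scaler0 addr0 -!scalerDl scalerA.
case: eqP => _; last by rewrite !addr0 mulr0.
have [-> -> ->] := form_h_lam6.
have ne0 (k : nat) : (k.+1%:R : algC) != 0 by rewrite pnatr_eq0.
by congr (_ *: _); field; rewrite ?ne0.
Qed.

Lemma Lvir_vac6 (n : nat) :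
  Lvir n vac6 = (if n == 0%N then (15%:R : algC)^-1 else 0) *: vac6.
Proof. by rewrite /Lvir -[n%:Z + 1]/(Posz (n + 1)) addn1 omega_mode_vac6. Qed.

Lemma vop_vac6 (c : qcoord) n : - c 0 (inord 5) <= n -> vop c n vac6 = 0.
Proof. by rewrite -pairQP_lam; apply: vop_vac. Qed.

Lemma tau_lam5 : tau (lam 5) = lam 0.
Proof.
apply/matrixP => i j; rewrite !mxE /tau_ix (ord1 i) eqxx /=.
by case: j => [[|[|[|[|[|[|j]]]]]] ?] //=; rewrite -!val_eqE /= !inordK.
Qed.

Theorem lemma6p17 :
  in_VLambda6 (bvec (onecm _) (lam 5)) /\
  is_hw_vector ((15%:R : algC)^-1) omega4 (bvec (onecm _) (lam 5)).
Proof.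
split.
  move=> k; rewrite msupp_bvec in_fset1 => /eqP ->; exists 0.
  by rewrite /rootv mul0mx addr0.
split; first by rewrite monalgU_eq0 oner_eq0.
split.
- by apply: vop_vac6; rewrite !mxE /= inordK.
- case=> [[|[|[|[|i]]]] ?] //; rewrite /raising /= ?vop_vac6 ?addr0 //;
    by rewrite !mxE oppr_le0.
- by rewrite !Lvir_vac6 !scale0r.
- by rewrite Lvir_vac6.
- by move=> k; rewrite msupp_bvec in_fset1 => /eqP -> /=; rewrite /Proj tau_lam5 addrC.
Qed.
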